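(* For all $a,b\in[0,j_{3/2,1}]$, $$|b\sin a-a\sin b|\ge|a-b|\sqrt{(a\cos a-\sin a)(b\cos b-\sin b)},$$ where $j_{3/2,1}=4.4934\ldots$ is the first positive root of $\sin x=x\cos x$. *)

From Stdlib Require Import Reals.
Open Scope R_scope.

Definition first_pos_root_sin_xcos (j : R) : Prop :=
  0 < j /\ sin j = j * cos j /\
  (forall x, 0 < x < j -> sin x <> x * cos x).

(* Put g t = sin t - t cos t, which is positive on (0, j), and w t = t / sqrt (g t).
   Since (sin t / t)' = - g t / t^2 = - 1 / (w t)^2, the inequality for 0 < a < b < j
   is equivalent to H_a b >= 0, where
        H_a t = sin a / a - sin t / t - (t - a) / (w a * w t),
   and H_a a = 0.  One computes
        H_a' t = (w a - w t + (t - a) w' t) / (w a * (w t)^2),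
   which is nonnegative as soon as w is convex: the tangent of w at t lies below w.
   Convexity holds because w'' t = t N t / (4 g^2 sqrt g) with
        N t = 3 t^2 sin^2 t + 2 t^2 cos^2 t + 4 t sin t cos t - 6 sin^2 t >= 0,
   which is proved with a sum of squares for 3 t^2 >= 8 and with Taylor bounds on
   sin and cos at 2t otherwise. *)
From Coquelicot Require Import Coquelicot.
From Stdlib Require Import Reals Lra Psatz.
Open Scope R_scope.

Lemma nondecreasing_of_derive (f df : R -> R) (x y : R) : x <= y ->
  (forall t, x <= t <= y -> is_derive f t (df t)) ->
  (forall t, x <= t <= y -> 0 <= df t) -> f x <= f y.
Proof.
  intros Hxy Hd Hpos.
  destruct (MVT_gen f x y df) as [c [Hc Ediff]].
  - intros t Ht. apply Hd. rewrite Rmin_left, Rmax_right in Ht by lra. lra.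
  - intros t Ht. rewrite Rmin_left, Rmax_right in Ht by lra.
    apply continuity_pt_filterlim, (ex_derive_continuous f t).
    eexists. apply Hd; lra.
  - rewrite Rmin_left, Rmax_right in Hc by lra.
    assert (0 <= df c * (y - x)) by (apply Rmult_le_pos; [apply Hpos|]; lra).
    lra.
Qed.

Lemma nonneg_of_derive_from_zero (f df : R -> R) (y : R) : 0 <= y -> f 0 = 0 ->
  (forall t, 0 <= t <= y -> is_derive f t (df t)) ->
  (forall t, 0 <= t <= y -> 0 <= df t) -> 0 <= f y.
Proof. intros Hy H0 Hd Hpos. rewrite <- H0. exact (nondecreasing_of_derive f df 0 y Hy Hd Hpos). Qed.

Lemma sin_upper1 y : 0 <= y -> sin y <= y.
Proof.
  intro Hy. enough (0 <= y - sin y) by lra.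
  apply (nonneg_of_derive_from_zero (fun y => y - sin y) (fun y => 1 - cos y)); auto.
  - rewrite sin_0; field.
  - intros t _. auto_derive; auto; ring.
  - intros t _. pose proof (COS_bound t); lra.
Qed.

Lemma cos_lower2 y : 0 <= y -> 1 - y^2/2 <= cos y.
Proof.
  intro Hy. enough (0 <= cos y - 1 + y^2/2) by lra.
  apply (nonneg_of_derive_from_zero (fun y => cos y - 1 + y^2/2) (fun y => y - sin y)); auto.
  - rewrite cos_0; field.
  - intros t _. auto_derive; auto; field.
  - intros t Ht. pose proof (sin_upper1 t); lra.
Qed.

Lemma sin_lower3 y : 0 <= y -> y - y^3/6 <= sin y.
Proof.
  intro Hy. enough (0 <= sin y - y + y^3/6) by lra.
  apply (nonneg_of_derive_from_zero (fun y => sin y - y + y^3/6)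
           (fun y => cos y - 1 + y^2/2)); auto.
  - rewrite sin_0; field.
  - intros t _. auto_derive; auto; field.
  - intros t Ht. pose proof (cos_lower2 t); lra.
Qed.

Lemma cos_upper4 y : 0 <= y -> cos y <= 1 - y^2/2 + y^4/24.
Proof.
  intro Hy. enough (0 <= 1 - y^2/2 + y^4/24 - cos y) by lra.
  apply (nonneg_of_derive_from_zero (fun y => 1 - y^2/2 + y^4/24 - cos y)
           (fun y => sin y - y + y^3/6)); auto.
  - rewrite cos_0; field.
  - intros t _. auto_derive; auto; field.
  - intros t Ht. pose proof (sin_lower3 t); lra.
Qed.

Lemma sin_upper5 y : 0 <= y -> sin y <= y - y^3/6 + y^5/120.
Proof.
  intro Hy. enough (0 <= y - y^3/6 + y^5/120 - sin y) by lra.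
  apply (nonneg_of_derive_from_zero (fun y => y - y^3/6 + y^5/120 - sin y)
           (fun y => 1 - y^2/2 + y^4/24 - cos y)); auto.
  - rewrite sin_0; field.
  - intros t _. auto_derive; auto; field.
  - intros t Ht. pose proof (cos_upper4 t); lra.
Qed.

Lemma cos_lower6 y : 0 <= y -> 1 - y^2/2 + y^4/24 - y^6/720 <= cos y.
Proof.
  intro Hy. enough (0 <= cos y - (1 - y^2/2 + y^4/24 - y^6/720)) by lra.
  apply (nonneg_of_derive_from_zero (fun y => cos y - (1 - y^2/2 + y^4/24 - y^6/720))
           (fun y => y - y^3/6 + y^5/120 - sin y)); auto.
  - rewrite cos_0; field.
  - intros t _. auto_derive; auto; field.
  - intros t Ht. pose proof (sin_upper5 t); lra.
Qed.

Lemma sin_lower7 y : 0 <= y -> y - y^3/6 + y^5/120 - y^7/5040 <= sin y.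
Proof.
  intro Hy. enough (0 <= sin y - (y - y^3/6 + y^5/120 - y^7/5040)) by lra.
  apply (nonneg_of_derive_from_zero (fun y => sin y - (y - y^3/6 + y^5/120 - y^7/5040))
           (fun y => cos y - (1 - y^2/2 + y^4/24 - y^6/720))); auto.
  - rewrite sin_0; field.
  - intros t _. auto_derive; auto; field.
  - intros t Ht. pose proof (cos_lower6 t); lra.
Qed.

(* The numerator of the second derivative of w (see below). *)
Definition numer (t : R) : R :=
  3*t^2*(sin t)^2 + 2*t^2*(cos t)^2 + 4*t*sin t*cos t - 6*(sin t)^2.

(* Rewritten with the double angle y = 2t, numer becomes
   5y^2/8 - 3 + cos y (3 - y^2/8) + y sin y, which is nonnegative for y^2 <= 32/3:
   with the Taylor bounds of order 6 and 7 it is at least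
   y^4 (1/48 - y^2/960 - y^4/40320) >= 0. *)
Lemma double_angle_form_nonneg y : 0 <= y -> y^2 <= 32/3 ->
  0 <= 5*y^2/8 - 3 + cos y * (3 - y^2/8) + y * sin y.
Proof.
  intros Hy Hy2.
  assert (Hcos : (1 - y^2/2 + y^4/24 - y^6/720) * (3 - y^2/8) <= cos y * (3 - y^2/8))
    by (apply Rmult_le_compat_r; [nra | apply cos_lower6; lra]).
  assert (Hsin : y * (y - y^3/6 + y^5/120 - y^7/5040) <= y * sin y)
    by (apply Rmult_le_compat_l; [lra | apply sin_lower7; lra]).
  assert (Hpoly : 0 <= y^4 * (1/48 - y^2/960 - y^4/40320)) by (apply Rmult_le_pos; nra).
  nra.
Qed.

Lemma numer_nonneg t : 0 <= t -> 0 <= numer t.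
Proof.
  intro Ht. unfold numer.
  pose proof (sin2_cos2 t) as Epyth. unfold Rsqr in Epyth.
  destruct (Rle_or_lt 8 (3*t^2)) as [Hlarge|Hsmall].
  -
    replace (3*t^2*(sin t)^2 + 2*t^2*(cos t)^2 + 4*t*sin t*cos t - 6*(sin t)^2)
      with (2*(t*cos t + sin t)^2 + (3*t^2-8)*(sin t)^2) by ring.
    assert (0 <= (3*t^2-8)*(sin t)^2) by (apply Rmult_le_pos; [lra | apply pow2_ge_0]).
    pose proof (pow2_ge_0 (t*cos t + sin t)). lra.
  - assert (Hform := double_angle_form_nonneg (2*t) ltac:(lra) ltac:(nra)).
    rewrite cos_2a_sin, sin_2a in Hform. nra.
Qed.

Definition g (t : R) : R := sin t - t * cos t.
Definition w (t : R) : R := t / sqrt (g t).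
Definition dw (t : R) : R := (g t - t^2 * sin t / 2) / (g t * sqrt (g t)).
Definition d2w (t : R) : R := t * numer t / (4 * (g t)^2 * sqrt (g t)).

Lemma g_pos_small t : 0 < t <= 2 -> 0 < g t.
Proof.
  intro Ht. unfold g.
  assert (Hsin := sin_lower3 t ltac:(lra)).
  assert (t * cos t <= t * (1 - t^2/2 + t^4/24))
    by (apply Rmult_le_compat_l; [lra | apply cos_upper4; lra]).
  assert (0 < t^3 * (8 - t^2)) by (apply Rmult_lt_0_compat; [apply pow_lt | nra]; lra).
  nra.
Qed.

Lemma g_continuous : continuity g.
Proof.
  unfold g. apply continuity_minus; [apply continuity_sin|].
  apply continuity_mult; [apply derivable_continuous, derivable_id | apply continuity_cos].
Qed.

(* g > 0 on (0, j): otherwise, by the intermediate value theorem, g would vanish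
   between 1 and a point of (2, j), contradicting the minimality of j. *)
Lemma g_pos j (hj : first_pos_root_sin_xcos j) t : 0 < t < j -> 0 < g t.
Proof.
  destruct hj as [_ [_ Hfirst]]. intro Ht.
  destruct (Rlt_or_le 0 (g t)) as [Hpos|Hnonpos]; auto.
  destruct (Rle_or_lt t 2) as [Hle2|Hgt2]; [apply g_pos_small; lra|].
  assert (Hg1 := g_pos_small 1 ltac:(lra)).
  destruct (IVT_cor g 1 t g_continuous ltac:(lra)) as [z [Hz Hgz]].
  { assert (0 <= g 1 * - g t) by (apply Rmult_le_pos; lra). lra. }
  exfalso. apply (Hfirst z); [lra|]. unfold g in Hgz. lra.
Qed.

Lemma w_pos t : 0 < t -> 0 < g t -> 0 < w t.
Proof. intros. apply Rdiv_lt_0_compat; [|apply sqrt_lt_R0]; auto. Qed.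

Lemma is_derive_w t : 0 < g t -> is_derive w t (dw t).
Proof.
  intro Hg. unfold w, dw. unfold g in *.
  assert (Hr : 0 < sqrt (sin t - t*cos t)) by (apply sqrt_lt_R0; lra).
  assert (Hrr := sqrt_sqrt (sin t - t*cos t) ltac:(lra)).
  auto_derive; replace (sin t + - (t*cos t)) with (sin t - t*cos t) by ring.
  - repeat split; lra.
  - set (r := sqrt (sin t - t*cos t)) in *. clearbody r.
    replace (sin t) with (r*r + t*cos t) by lra. field. lra.
Qed.

Lemma is_derive_dw t : 0 < g t -> is_derive dw t (d2w t).
Proof.
  intro Hg. unfold dw, d2w, numer. unfold g in *.
  assert (Hr : 0 < sqrt (sin t - t*cos t)) by (apply sqrt_lt_R0; lra).
  assert (Hrr := sqrt_sqrt (sin t - t*cos t) ltac:(lra)).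
  auto_derive; replace (sin t + - (t*cos t)) with (sin t - t*cos t) by ring.
  - repeat split; nra.
  - set (r := sqrt (sin t - t*cos t)) in *. clearbody r.
    replace (sin t) with (r*r + t*cos t) by lra. field. lra.
Qed.

Lemma dw_nondecreasing j (hj : first_pos_root_sin_xcos j) x y :
  0 < x -> x <= y -> y < j -> dw x <= dw y.
Proof.
  intros Hx Hxy Hy. apply (nondecreasing_of_derive dw d2w); auto.
  - intros t Ht. apply is_derive_dw, (g_pos j hj); lra.
  - intros t Ht. assert (Hg := g_pos j hj t ltac:(lra)). unfold d2w.
    assert (0 < sqrt (g t)) by (apply sqrt_lt_R0; lra).
    apply Rdiv_le_0_compat.
    + apply Rmult_le_pos; [lra | apply numer_nonneg; lra].
    + apply Rmult_lt_0_compat; nra.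
Qed.

Lemma tangent_below (f df : R -> R) a t : a <= t ->
  (forall x, a <= x <= t -> is_derive f x (df x)) ->
  (forall x, a <= x <= t -> df x <= df t) ->
  0 <= f a - f t + (t - a) * df t.
Proof.
  intros Hat Hd Hmono.
  set (gap := fun y => f t + (y - t) * df t - f y).
  assert (Hcmp : gap a <= gap t).
  { apply (nondecreasing_of_derive gap (fun y => df t - df y)); auto.
    - intros x Hx. apply (is_derive_minus (fun y => f t + (y - t) * df t) f x (df t) (df x));
        [auto_derive; auto; ring | apply Hd; exact Hx].
    - intros x Hx. pose proof (Hmono x Hx). lra. }
  unfold gap in Hcmp. lra.
Qed.

Definition H (a t : R) : R := sin a / a - sin t / t - (t - a) / (w a * w t).

Lemma is_derive_H a t : 0 < a -> 0 < t -> 0 < g a -> 0 < g t ->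
  is_derive (H a) t ((w a - w t + (t - a) * dw t) / (w a * (w t)^2)).
Proof.
  intros Ha Ht Hga Hgt. unfold H, w, dw. unfold g in *.
  assert (Hr : 0 < sqrt (sin t - t*cos t)) by (apply sqrt_lt_R0; lra).
  assert (Hrr := sqrt_sqrt (sin t - t*cos t) ltac:(lra)).
  assert (Hq : 0 < sqrt (sin a - a*cos a)) by (apply sqrt_lt_R0; lra).
  auto_derive; replace (sin t + - (t*cos t)) with (sin t - t*cos t) by ring.
  - repeat split; try apply Rgt_not_eq; try apply Rmult_gt_0_compat; try lra;
      apply Rdiv_lt_0_compat; lra.
  - set (r := sqrt (sin t - t*cos t)) in *. clearbody r.
    set (q := sqrt (sin a - a*cos a)) in *. clearbody q.
    replace (sin t) with (r*r + t*cos t) by lra. field. lra.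
Qed.

(* H_a is nondecreasing on [a, j) and vanishes at a, so H_a b >= 0. *)
Lemma H_nonneg j (hj : first_pos_root_sin_xcos j) a b :
  0 < a -> a <= b -> b < j -> 0 <= H a b.
Proof.
  intros Ha Hab Hb.
  assert (Hga := g_pos j hj a ltac:(lra)).
  replace 0 with (H a a) by (unfold H; replace (a - a) with 0 by ring; unfold Rdiv; ring).
  apply (nondecreasing_of_derive (H a) (fun t => (w a - w t + (t - a) * dw t) / (w a * (w t)^2)));
    auto.
  - intros t Ht. apply is_derive_H; try lra; apply (g_pos j hj); lra.
  - intros t Ht. assert (Hgt := g_pos j hj t ltac:(lra)).
    apply Rdiv_le_0_compat.
    + apply (tangent_below w dw a t); try lra.
      * intros x Hx. apply is_derive_w, (g_pos j hj); lra.
      * intros x Hx. apply (dw_nondecreasing j hj); lra.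
    + assert (0 < w a) by (apply w_pos; auto). assert (0 < w t) by (apply w_pos; lra).
      apply Rmult_lt_0_compat; [lra | apply pow_lt; lra].
Qed.

(* The inequality in the interior, for 0 < a < b < j: multiply H_a b >= 0 by a b. *)
Lemma interior_inequality j (hj : first_pos_root_sin_xcos j) a b :
  0 < a -> a < b -> b < j -> (b - a) * sqrt (g a * g b) <= b * sin a - a * sin b.
Proof.
  intros Ha Hab Hb.
  assert (HH := H_nonneg j hj a b Ha ltac:(lra) Hb). unfold H, w in HH.
  assert (Hga := g_pos j hj a ltac:(lra)). assert (Hgb := g_pos j hj b ltac:(lra)).
  rewrite sqrt_mult by lra.
  assert (Hra : 0 < sqrt (g a)) by (apply sqrt_lt_R0; lra).
  assert (Hrb : 0 < sqrt (g b)) by (apply sqrt_lt_R0; lra).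
  set (ra := sqrt (g a)) in *. set (rb := sqrt (g b)) in *.
  set (D := b * sin a - a * sin b - (b - a) * (ra * rb)).
  replace (sin a / a - sin b / b - (b - a) / (a / ra * (b / rb))) with (D / (a * b)) in HH
    by (unfold D; field; repeat split; lra).
  assert (0 <= D / (a*b) * (a*b)) by (apply Rmult_le_pos; nra).
  replace (D / (a*b) * (a*b)) with D in * by (field; split; lra).
  unfold D in *. lra.
Qed.

(* The theorem for 0 <= a <= b <= j; at the endpoints 0 and j the right-hand side
   vanishes because g 0 = g j = 0. *)
Lemma ordered_inequality j (hj : first_pos_root_sin_xcos j) a b :
  0 <= a -> a <= b -> b <= j ->
  Rabs (a - b) * sqrt (g a * g b) <= Rabs (b * sin a - a * sin b).
Proof.
  intros Ha Hab Hb. pose proof (Rabs_pos (b * sin a - a * sin b)).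
  pose proof hj as (Hj0 & Hjroot & _).
  assert (Hg_end : forall t, t = 0 \/ t = j -> g t = 0).
  { intros t [-> | ->]; unfold g; [rewrite sin_0 | rewrite Hjroot]; ring. }
  destruct (Req_dec a 0) as [Ea|Ea]; [rewrite Hg_end, Rmult_0_l, sqrt_0 by auto; lra|].
  destruct (Req_dec b j) as [Eb|Eb];
    [rewrite (Hg_end b), Rmult_0_r, sqrt_0 by auto; lra|].
  destruct (Req_dec a b) as [Eab|Eab];
    [subst; rewrite Rminus_diag, Rabs_R0; lra|].
  assert (Hint := interior_inequality j hj a b ltac:(lra) ltac:(lra) ltac:(lra)).
  assert (0 <= (b - a) * sqrt (g a * g b)) by (apply Rmult_le_pos; [lra | apply sqrt_pos]).
  rewrite Rabs_left1, Rabs_pos_eq by lra. lra.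
Qed.

Theorem mainTheorem9 (j : R) (hj : first_pos_root_sin_xcos j) (a b : R)
  (ha : 0 <= a <= j) (hb : 0 <= b <= j) :
  Rabs (b * sin a - a * sin b) >=
  Rabs (a - b) * sqrt ((a * cos a - sin a) * (b * cos b - sin b)).
Proof.
  replace ((a * cos a - sin a) * (b * cos b - sin b)) with (g a * g b) by (unfold g; ring).
  apply Rle_ge.
  destruct (Rle_or_lt a b) as [Hab|Hba].
  - apply (ordered_inequality j hj); lra.
  -
    rewrite Rabs_minus_sym, Rmult_comm with (r1 := g a).
    replace (b * sin a - a * sin b) with (- (a * sin b - b * sin a)) by ring.
    rewrite Rabs_Ropp. apply (ordered_inequality j hj); lra.
Qed.
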